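(* Consider $N$ users indexed by $\mathcal{U}=\{1,\dots,N\}$ with fixed channel power gains $h_1,\dots,h_N>0$ and noise variance $\eta>0$. For each $i\in\mathcal{U}$ let the strategy set be $\mathcal{P}^i=[0,P_i^{max}]$ with $P_i^{max}>0$, and for $\mathbf{P}=(P_1,\dots,P_N)\in\prod_{i}\mathcal{P}^i$ let $$r_i(\mathbf{P})=\log_2\!\Big(1+\frac{h_iP_i}{\eta+\sum_{j\neq i}h_jP_j}\Big).$$ Given targets $\theta_1,\dots,\theta_N$, a profile $\mathbf{P}^+\in\prod_i\mathcal{P}^i$ is a satisfaction equilibrium (SE) if $r_i(\mathbf{P}^+)\ge\theta_i$ for every $i\in\mathcal{U}$. Then the set of satisfaction equilibria is convex, closed and bounded (as a subset of $\mathbb{R}^N$).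
   Context: This is the game $\mathcal{G}=\{\mathcal{U},\{\mathcal{P}^i\},\{r_i\},\{\theta_i\}\}$: $r_i$ is the bandwidth-normalized throughput of user $i$ (a base-2 logarithm of one plus its signal-to-interference-and-noise ratio), $\theta_i$ is user $i$'s target throughput. *)

From HB Require Import structures.
From mathcomp Require Import all_boot all_order all_algebra.
From mathcomp Require Import all_classical all_reals all_analysis.
Set Implicit Arguments. Unset Strict Implicit. Unset Printing Implicit Defensive.
Import Order.TTheory GRing.Theory Num.Theory.
Local Open Scope ring_scope.
Local Open Scope classical_set_scope.

Definition log2 {R : realType} (x : R) : R := ln x / ln 2.

Definition rate {R : realType} {N : nat} (h : 'I_N -> R) (eta : R)
  (P : 'rV[R]_N) (i : 'I_N) : R :=
  log2 (1 + h i * P ord0 i / (eta + \sum_(j < N | j != i) h j * P ord0 j)).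

Definition feasible {R : realType} {N : nat} (Pmax : 'I_N -> R) (P : 'rV[R]_N) :=
  forall i : 'I_N, 0 <= P ord0 i <= Pmax i.

Definition SE_set {R : realType} {N : nat} (h : 'I_N -> R) (eta : R)
  (Pmax theta : 'I_N -> R) : set 'rV[R]_N :=
  [set P | feasible Pmax P /\ forall i : 'I_N, theta i <= rate h eta P i].

From HB Require Import structures.
From mathcomp Require Import all_boot all_order all_algebra.
From mathcomp Require Import all_classical all_reals all_analysis.
Import Order.TTheory GRing.Theory Num.Theory.
Import numFieldNormedType.Exports.
Local Open Scope ring_scope.
Local Open Scope classical_set_scope.

(* Since the interference-plus-noise term D_i(P) = eta + sum_{j <> i} h_j P_j is
   positive and log_2 is increasing, the requirement r_i(P) >= theta_i is the
   linear inequality (2^theta_i - 1) D_i(P) <= h_i P_i. Together with the box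
   constraints 0 <= P_i <= P_i^max, the satisfaction equilibria are therefore
   the intersection of finitely many closed half-spaces, and lie in a box. *)

Section convex_set_intersection.
Variables (R : numDomainType) (M : lmodType R).

Lemma convex_setI (A B : set (convex_lmodType M)) :
  convex_set A -> convex_set B -> convex_set (A `&` B).
Proof.
move=> cA cB x y t /set_mem[xA xB] /set_mem[yA yB]; apply/mem_set.
by split; apply/set_mem; [apply: cA | apply: cB]; apply/mem_set.
Qed.

Lemma convex_set_bigcap (I : Type) (D : set I)
    (F : I -> set (convex_lmodType M)) :
  (forall i, D i -> convex_set (F i)) -> convex_set (\bigcap_(i in D) F i).
Proof.
move=> cF x y t /set_mem xF /set_mem yF; apply/mem_set => i Di.
by apply/set_mem/cF => //; apply/mem_set; [apply: xF | apply: yF].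
Qed.

End convex_set_intersection.

Definition halfspace {R : numDomainType} {n : nat} (w : 'I_n -> R) (b : R) :
  set 'rV[R]_n := [set x | b <= \sum_j w j * x ord0 j].

Lemma convex_halfspace {R : numDomainType} {n : nat} (w : 'I_n -> R) (b : R) :
  convex_set (halfspace w b).
Proof.
move=> x y t /set_mem xH /set_mem yH; apply/mem_set.
have -> : conv t x y =
    t%:num *: (x : 'rV[R]_n) + (1 - t%:num) *: (y : 'rV[R]_n) :> 'rV[R]_n by [].
rewrite /halfspace /=.
under eq_bigr do rewrite !mxE mulrDr !(mulrCA (w _)).
rewrite big_split -!mulr_sumr /=.
have -> : b = t%:num * b + (1 - t%:num) * b by rewrite -mulrDl subrKC mul1r.
by rewrite lerD // ler_wpM2l // subr_ge0 le1.
Qed.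

Lemma closed_halfspace {R : realFieldType} {n : nat} (w : 'I_n -> R) (b : R) :
  closed (halfspace w b).
Proof.
have wsum_cont : continuous (fun x : 'rV[R]_n => \sum_j w j * x ord0 j).
  apply: continuous_big => [|j _]; first exact: add_continuous.
  move=> x; apply: continuousM; first exact: cst_continuous.
  exact: coord_continuous.
by apply: (preimage_closed _ (@closed_ge R b)) => x _; exact: wsum_cont.
Qed.

Lemma sub_bounded_set {K : numFieldType} {V : pseudoMetricNormedZmodType K}
    {A B : set V} :
  A `<=` B -> bounded_set B -> bounded_set A.
Proof. by move=> AB; apply: sub_boundedr => P BP x /AB; exact: BP. Qed.

Lemma bounded_coord_le {R : realFieldType} {n : nat} (c : 'I_n -> R) :
  bounded_set [set x : 'rV[R]_n | forall i, `|x ord0 i| <= c i].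
Proof.
set cmax := \big[Num.max/0]_j c j.
have cmax_ge0 : 0 <= cmax := bigmax_ge_id _ _ _ _.
rewrite /bounded_near /=; near=> M => x /= xc.
have cmax_le_M : cmax <= M by near: M; apply: nbhs_pinfty_ge; exact: num_real.
rewrite /Num.Def.normr /= mx_normrE.
apply: bigmax_le => [|[i j] _]; first exact: le_trans cmax_ge0 cmax_le_M.
by rewrite (ord1 i) (le_trans (xc j) (le_trans (le_bigmax 0 c j) cmax_le_M)).
Unshelve. all: end_near. Qed.

Definition coord_weight {R : numDomainType} {n : nat} (i : 'I_n) (a : R) :
  'I_n -> R := fun j => if j == i then a else 0.

Lemma sum_coord_weight {R : numDomainType} {n : nat} (i : 'I_n) (a : R)
    (x : 'rV[R]_n) :
  \sum_j coord_weight i a j * x ord0 j = a * x ord0 i.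
Proof.
rewrite (bigD1 i) //= /coord_weight eqxx big1 ?addr0 // => j /negPf ->.
exact: mul0r.
Qed.

Section satisfaction_equilibria.
Variables (R : realType) (N : nat) (h : 'I_N -> R) (eta : R).
Variables (Pmax theta : 'I_N -> R).
Hypotheses (hpos : forall i, 0 < h i) (etapos : 0 < eta).

Definition sinr_target (i : 'I_N) : R := expR (theta i * ln 2) - 1.

Definition interference_noise (P : 'rV[R]_N) (i : 'I_N) : R :=
  eta + \sum_(j < N | j != i) h j * P ord0 j.

Lemma rate_ge_target (P : 'rV[R]_N) (i : 'I_N) : feasible Pmax P ->
  (theta i <= rate h eta P i) =
  (sinr_target i * interference_noise P i <= h i * P ord0 i).
Proof.
move=> fP.
have P_ge0 j : 0 <= P ord0 j by case/andP: (fP j).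
have IN_gt0 : 0 < interference_noise P i.
  by apply: ltr_wpDr => //; apply: sumr_ge0 => j _; rewrite mulr_ge0 // ltW.
have ln2_gt0 : 0 < ln (2 : R) by rewrite ln_gt0 // ltr1n.
have sinr_ge0 : 0 <= h i * P ord0 i / interference_noise P i.
  by rewrite divr_ge0 ?mulr_ge0 // ltW.
rewrite /rate /log2 -/(interference_noise P i) ler_pdivlMr //.
rewrite -[in LHS]ler_expR lnK; last by rewrite posrE ltr_wpDr.
by rewrite /sinr_target -lerBlDl -ler_pdivlMr.
Qed.

Definition rate_weight (i j : 'I_N) : R :=
  if j == i then h i else - (sinr_target i * h j).

Lemma rate_halfspaceE (P : 'rV[R]_N) (i : 'I_N) :
  (sinr_target i * eta <= \sum_j rate_weight i j * P ord0 j) =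
  (sinr_target i * interference_noise P i <= h i * P ord0 i).
Proof.
rewrite (bigD1 i) //= /rate_weight eqxx.
under eq_bigr => j /negPf -> do rewrite mulNr -mulrA.
by rewrite sumrN -mulr_sumr lerBrDr -mulrDr.
Qed.

Lemma SE_setE : SE_set h eta Pmax theta =
  \bigcap_(i in setT) (halfspace (coord_weight i 1) 0 `&`
    halfspace (coord_weight i (-1)) (- Pmax i) `&`
    halfspace (rate_weight i) (sinr_target i * eta)).
Proof.
rewrite /halfspace; apply/seteqP; split => P.
  move=> [fP rateP] i _ /=; rewrite !sum_coord_weight mul1r mulN1r lerN2.
  by rewrite rate_halfspaceE -rate_ge_target //; case/andP: (fP i) => -> ->.
move=> hP; have fP : feasible Pmax P.
  move=> i; have [[] + + _] := hP i I.
  by rewrite /= !sum_coord_weight mul1r mulN1r lerN2 => -> ->.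
split=> // i; have [_ /=] := hP i I.
by rewrite rate_halfspaceE rate_ge_target.
Qed.

End satisfaction_equilibria.

Theorem proposition1 (R : realType) (N : nat) (h : 'I_N -> R) (eta : R)
  (Pmax theta : 'I_N -> R)
  (hpos : forall i, 0 < h i) (etapos : 0 < eta) (Pmaxpos : forall i, 0 < Pmax i) :
  convex_set (SE_set h eta Pmax theta) /\
  closed (SE_set h eta Pmax theta) /\
  bounded_set (SE_set h eta Pmax theta).
Proof.
split; [|split].
- rewrite SE_setE //; apply: convex_set_bigcap => i _.
  by repeat apply: convex_setI; exact: convex_halfspace.
- rewrite SE_setE //; apply: closed_bigI => i _.
  by repeat apply: closedI; exact: closed_halfspace.
- apply: (sub_bounded_set _ (bounded_coord_le Pmax)) => P [fP _] i.
  by case/andP: (fP i) => P0 PM; rewrite ger0_norm.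
Qed.
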